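(* For $m\ge1$, the space $(\mathbb Z^m,d_a)$ admits a linear $1$-perfect code if and only if there exists an Abelian planar difference set of order $m$.
   Context: $d_a(\mathbf x,\mathbf y)=\max\{\sum_{i:x_i>y_i}(x_i-y_i),\sum_{i:x_i<y_i}(y_i-x_i)\}$ on $\mathbb Z^m$. A linear code is a sublattice (subgroup) of $\mathbb Z^m$. A code $\mathcal C$ is $r$-perfect if the balls $\{\mathbf y:d_a(\mathbf y,\mathbf x)\le r\}$, $\mathbf x\in\mathcal C$, are pairwise disjoint and cover $\mathbb Z^m$. An Abelian planar difference set of order $m$ is a subset $D$ of cardinality $m+1$ of an Abelian group $G$ of order $m^2+m+1$ such that every nonzero element of $G$ can be written as $a-b$ with $a,b\in D$ in exactly one way. *)

From HB Require Import structures.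
From mathcomp Require Import all_boot all_order all_algebra.
Set Implicit Arguments. Unset Strict Implicit. Unset Printing Implicit Defensive.
Import Order.TTheory GRing.Theory Num.Theory.
Local Open Scope ring_scope.

Definition dist_a (m : nat) (x y : 'rV[int]_m) : int :=
  Num.max (\sum_(i < m | y 0 i < x 0 i) (x 0 i - y 0 i))
          (\sum_(i < m | x 0 i < y 0 i) (y 0 i - x 0 i)).

Definition linear_code (m : nat) (C : pred 'rV[int]_m) : Prop :=
  0 \in C /\ (forall x y, x \in C -> y \in C -> x - y \in C).

Definition perfect_code (m r : nat) (C : pred 'rV[int]_m) : Prop :=
  (forall x x' y, x \in C -> x' \in C -> x != x' ->
      ~ (dist_a y x <= r%:Z /\ dist_a y x' <= r%:Z)) /\
  (forall y, exists2 x, x \in C & dist_a y x <= r%:Z).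

Definition planar_difference_set (G : finZmodType) (m : nat) (D : {set G}) : Prop :=
  #|G| = (m ^ 2 + m + 1)%N /\ #|D| = m.+1 /\
  (forall g : G, g != 0 ->
     #|[set p : G * G | [&& p.1 \in D, p.2 \in D & p.1 - p.2 == g]]| = 1%N).

From HB Require Import structures.
From mathcomp Require Import all_boot all_order all_algebra.
From mathcomp Require Import zify.
Import Order.TTheory GRing.Theory Num.Theory.
Local Open Scope ring_scope.
Set Implicit Arguments.
Unset Strict Implicit.

(* The d_a-ball of radius 1 around 0 consists of the vectors e_a - e_b, where a, b range over
   {0, ..., m} and e_0 = 0; the pairs with a <> b, together with one pair for 0, name its
   m^2 + m + 1 points bijectively. A linear code C is 1-perfect iff this ball is a transversal
   of Z^m / C. Then Z^m / C has order m^2 + m + 1, and the classes of e_0, ..., e_m form a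
   planar difference set, since every nonzero class is e_a - e_b for exactly one pair (a, b).
   Conversely, for a planar difference set {d_0, ..., d_m}, the map Z^m -> G, e_i |-> d_i - d_0,
   sends the ball bijectively onto G, so its kernel is a 1-perfect linear code. *)

Section UnitBall.
Variable m : nat.
Implicit Types (a b c e : option 'I_m) (x y z : 'rV[int]_m).

Definition unit_vec a : 'rV[int]_m := \row_j (a == Some j)%:R.
Definition ball_vec a b : 'rV[int]_m := unit_vec a - unit_vec b.

Lemma ball_vecE a b k : ball_vec a b 0 k = (a == Some k)%:R - (b == Some k)%:R.
Proof. by rewrite !mxE. Qed.

Lemma ball_vec_diag a : ball_vec a a = 0.
Proof. exact: subrr. Qed.

Lemma dist_a_sub y x : dist_a y x = dist_a (y - x) 0.
Proof.
rewrite /dist_a; congr Num.max.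
  by apply: eq_big => i; rewrite !mxE ?subr_gt0 // subr0.
by apply: eq_big => i; rewrite !mxE ?subr_lt0 // sub0r opprB.
Qed.

Lemma dist_a_opp z : dist_a (- z) 0 = dist_a z 0.
Proof.
rewrite /dist_a maxC; congr Num.max;
  by apply: eq_big => i; rewrite !mxE ?oppr_lt0 ?oppr_gt0 // ?subr0 ?sub0r ?opprK.
Qed.

Lemma sum_unit_vec_le1 a : \sum_i ((a == Some i)%:R : int) <= 1.
Proof.
case: a => [k|]; last by rewrite big1.
rewrite (bigD1 k) //= eqxx big1 ?addr0 // => i ik.
by case: eqP => // -[ki]; rewrite ki eqxx in ik.
Qed.

Lemma dist_ball_vec a b : dist_a (ball_vec a b) 0 <= 1.
Proof.
rewrite /dist_a ge_max; apply/andP; split;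
  [apply: le_trans (sum_unit_vec_le1 a) | apply: le_trans (sum_unit_vec_le1 b)];
  rewrite big_mkcond /=; apply: ler_sum => i _;
  by rewrite !mxE; case: eqP; case: eqP.
Qed.

Lemma dist_a0_le1 : dist_a (0 : 'rV[int]_m) 0 <= 1.
Proof. by have := dist_ball_vec None None; rewrite ball_vec_diag. Qed.

Lemma ball_pos_sum z : dist_a z 0 <= 1 -> \sum_(k | 0 < z 0 k) z 0 k <= 1.
Proof.
rewrite /dist_a ge_max => /andP[+ _].
by rewrite (eq_big (fun k => 0 < z 0 k) (fun k => z 0 k)) => // [k|k _]; rewrite mxE ?subr0.
Qed.

Lemma ball_pos_coord z i : dist_a z 0 <= 1 -> 0 < z 0 i ->
  z 0 i = 1 /\ forall j, 0 < z 0 j -> j = i.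
Proof.
move=> /ball_pos_sum hz zi; split.
  suff : z 0 i <= 1 by move: zi; lia.
  by apply: le_trans hz; rewrite (bigD1 i) //= lerDl; apply: sumr_ge0 => k /andP[/ltW].
move=> j zj; apply/eqP; apply: contraT => ji.
suff : z 0 i + z 0 j <= 1 by move: zi zj; lia.
apply: le_trans hz; rewrite (bigD1 i) //= (bigD1 j) /=; last by rewrite zj.
by rewrite addrA lerDl; apply: sumr_ge0 => k /andP[/andP[/ltW]].
Qed.

Lemma ball_neg_coord z i : dist_a z 0 <= 1 -> z 0 i < 0 ->
  z 0 i = -1 /\ forall j, z 0 j < 0 -> j = i.
Proof.
rewrite -dist_a_opp => hz zi.
have [|zi1 uniq_i] := ball_pos_coord (i := i) hz; first by rewrite mxE oppr_gt0.
split; first by apply/eqP; rewrite -eqr_oppLR -zi1 mxE.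
by move=> j zj; apply: uniq_i; rewrite mxE oppr_gt0.
Qed.

(* A pair (a, b) stands for e_a - e_b, the index None playing the role of an extra basis
   vector e_0 = 0; every vector of the unit ball has exactly one canonical name. *)
Definition canonical_pair (p : option 'I_m * option 'I_m) := (p.1 != p.2) || (p.1 == None).

Definition ball_index z := ([pick i | 0 < z 0 i], [pick i | z 0 i < 0]).

Lemma canonical_ball_index z : canonical_pair (ball_index z).
Proof.
rewrite /canonical_pair /ball_index /=; case: pickP => [i zi|]; last by rewrite orbT.
case: pickP => [j zj|] //=; apply/orP; left; apply/eqP => -[ij].
by move: zi zj; rewrite ij; lia.
Qed.

Lemma pick_ball_pos z k : dist_a z 0 <= 1 ->
  ([pick i | 0 < z 0 i] == Some k) = (0 < z 0 k).
Proof.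
move=> hz; case: pickP => [i zi|no_pos]; last by rewrite no_pos.
apply/eqP/idP => [[<-] //|zk].
by rewrite (proj2 (ball_pos_coord hz zk) i zi).
Qed.

Lemma pick_ball_neg z k : dist_a z 0 <= 1 ->
  ([pick i | z 0 i < 0] == Some k) = (z 0 k < 0).
Proof.
move=> hz; case: pickP => [i zi|no_neg]; last by rewrite no_neg.
apply/eqP/idP => [[<-] //|zk].
by rewrite (proj2 (ball_neg_coord hz zk) i zi).
Qed.

Lemma ball_indexK z : dist_a z 0 <= 1 -> ball_vec (ball_index z).1 (ball_index z).2 = z.
Proof.
move=> hz; apply/rowP => k; rewrite ball_vecE /ball_index /= pick_ball_pos // pick_ball_neg //.
case: (ltrgtP (z 0 k) 0) => [zn|zp|->] //.
  by have [-> _] := ball_neg_coord hz zn.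
by have [-> _] := ball_pos_coord hz zp.
Qed.

Lemma ball_vec_sign a b k : canonical_pair (a, b) ->
  (0 < ball_vec a b 0 k) = (a == Some k) /\ (ball_vec a b 0 k < 0) = (b == Some k).
Proof.
rewrite /canonical_pair ball_vecE /=.
case: (a =P Some k) => [->|_]; case: (b =P Some k) => [->|_] //=.
by rewrite eqxx.
Qed.

Lemma eq_option_Some (x y : option 'I_m) :
  (forall k, (x == Some k) = (y == Some k)) -> x = y.
Proof.
case: x => [i|] xy; first by apply/esym/eqP; rewrite -xy.
by case: y xy => [j|] // /(_ j); rewrite eqxx.
Qed.

Lemma ball_vecK a b : canonical_pair (a, b) -> ball_index (ball_vec a b) = (a, b).
Proof.
move=> hab; have hz := dist_ball_vec a b.
congr pair; apply: eq_option_Some => k.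
  by rewrite pick_ball_pos // (proj1 (ball_vec_sign k hab)).
by rewrite pick_ball_neg // (proj2 (ball_vec_sign k hab)).
Qed.

Lemma ball_vec_inj a b c e : c != e -> ball_vec a b = ball_vec c e -> (a, b) = (c, e).
Proof.
move=> ce abce; have hce : canonical_pair (c, e) by rewrite /canonical_pair /= ce.
have [hab|] := boolP (canonical_pair (a, b)).
  by rewrite -(ball_vecK hab) -(ball_vecK hce) abce.
rewrite /canonical_pair negb_or negbK /= => /andP[/eqP a_b _].
have h00 : canonical_pair (None, None) by [].
move: abce; rewrite a_b ball_vec_diag -(ball_vec_diag None) => /(congr1 ball_index).
by rewrite (ball_vecK h00) (ball_vecK hce) => -[c0 e0]; rewrite -c0 -e0 in ce.
Qed.

Lemma card_canonical_pair : #|[pred p | canonical_pair p]| = (m ^ 2 + m + 1)%N.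
Proof.
have := cardC [pred p | canonical_pair p].
rewrite card_prod card_option card_ord.
have -> : #|[predC [pred p | canonical_pair p]]| = m.
  rewrite (@eq_card _ _ [set (Some i, Some i) | i : 'I_m]) ?card_imset ?card_ord //.
    by move=> i j [].
  move=> [a b]; rewrite !inE /canonical_pair /= negb_or negbK.
  apply/andP/imsetP => [[/eqP <-]|[i _ [-> ->]]]; last by rewrite eqxx.
  by case: a => [i|] // _; exists i.
move: #|_| => n; rewrite expnS expn1 => h; nia.
Qed.
End UnitBall.

Lemma card_set1_unique (T : finType) (P : T -> Prop) (p : pred T) :
  (forall x, reflect (P x) (p x)) -> #|[set x | p x]| = 1%N <-> exists! x, P x.
Proof.
move=> pP; split=> [/eqP/cards1P[x px]|[x [Px Pxu]]].
  have pxE y : p y = (y == x) by rewrite -in_set1 -px inE.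
  exists x; split=> [|y /pP]; first by apply/pP; rewrite pxE.
  by rewrite pxE => /eqP ->.
apply/eqP/cards1P; exists x; apply/setP => y; rewrite !inE.
by apply/pP/eqP => [/Pxu <-|->].
Qed.

Definition ord_of_option n (a : option 'I_n) : 'I_n.+1 := oapp (lift ord0) ord0 a.

Lemma ord_of_optionK n : cancel (@ord_of_option n) (unlift ord0).
Proof. by case=> [i|] /=; rewrite ?liftK ?unlift_none. Qed.

Lemma unlift_ord0K n : cancel (unlift (@ord0 n)) (@ord_of_option n).
Proof. by move=> j; case: unliftP. Qed.

Lemma option_enum (T : finType) (A : {set T}) n : #|A| = n.+1 ->
  exists2 d : option 'I_n -> T, injective d & A = [set d a | a : option 'I_n].
Proof.
move=> hA; exists (fun a => enum_val (cast_ord (esym hA) (ord_of_option a))).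
  by move=> a b /enum_val_inj/cast_ord_inj/(congr1 (unlift ord0)); rewrite !ord_of_optionK.
apply/setP => x; apply/idP/imsetP => [xA|[a _ ->]]; last exact: enum_valP.
exists (unlift ord0 (cast_ord hA (enum_rank_in xA x))) => //.
by rewrite unlift_ord0K cast_ordK enum_rankK_in.
Qed.

Definition unique_differences (G : zmodType) m (d : option 'I_m -> G) :=
  forall g, g != 0 -> exists! p : option 'I_m * option 'I_m, d p.1 - d p.2 = g.

Lemma card_difference_pairs (G : finZmodType) m (d : option 'I_m -> G) g :
  injective d ->
  #|[set p : G * G | [&& p.1 \in [set d a | a : option 'I_m],
                        p.2 \in [set d a | a : option 'I_m] & p.1 - p.2 == g]]|
  = #|[set p | d p.1 - d p.2 == g]|.
Proof.
move=> d_inj; rewrite -(card_imset _ (f := fun p => (d p.1, d p.2))); last first.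
  by move=> [a b] [c e] [/d_inj -> /d_inj ->].
apply: eq_card => -[x y]; rewrite !inE /=; apply/idP/imsetP.
  by case/and3P => /imsetP[a _ ->] /imsetP[b _ ->] xy; exists (a, b); rewrite ?inE.
by case=> -[a b]; rewrite inE /= => ab [-> ->]; rewrite !imset_f.
Qed.

Lemma planar_difference_set_image (G : finZmodType) m (d : option 'I_m -> G) :
  injective d ->
  planar_difference_set m [set d a | a : option 'I_m] <->
  #|G| = (m ^ 2 + m + 1)%N /\ unique_differences d.
Proof.
move=> d_inj; have cardD : #|[set d a | a : option 'I_m]| = m.+1.
  by rewrite card_imset // card_option card_ord.
rewrite /planar_difference_set /unique_differences cardD.
split=> -[cardG hdiff]; [case: hdiff => _ hdiff | split=> //]; split=> // g g0.
  by apply/(card_set1_unique (fun p => eqP)); rewrite -card_difference_pairs // hdiff.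
by rewrite card_difference_pairs //; apply/(card_set1_unique (fun p => eqP))/hdiff.
Qed.

Section CodeOfDifferences.
Variables (m : nat) (G : zmodType) (d : option 'I_m -> G).
Hypotheses (d_inj : injective d) (d_diff : unique_differences d).

Definition diff_hom (y : 'rV[int]_m) : G := \sum_i (d (Some i) - d None) *~ y 0 i.

Lemma diff_homB x y : diff_hom (x - y) = diff_hom x - diff_hom y.
Proof. by rewrite /diff_hom -sumrB; apply: eq_bigr => i _; rewrite !mxE mulrzBr. Qed.

Lemma diff_hom0 : diff_hom 0 = 0.
Proof. by rewrite /diff_hom big1 // => i _; rewrite mxE mulr0z. Qed.

Lemma diff_hom_ball a b : diff_hom (ball_vec a b) = d a - d b.
Proof.
have unit a' : diff_hom (unit_vec a') = d a' - d None.
  rewrite /diff_hom; case: a' => [k|] /=; last first.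
    by rewrite subrr big1 // => i _; rewrite mxE mulr0z.
  rewrite (bigD1 k) //= mxE eqxx mulr1z big1 ?addr0 // => i ik.
  by rewrite mxE -[_ == _]/(k == i) eq_sym (negbTE ik) mulr0z.
by rewrite diff_homB !unit opprB addrA subrK.
Qed.

Lemma diff_hom_ball_inj a b a' b' :
  diff_hom (ball_vec a b) = diff_hom (ball_vec a' b') -> ball_vec a b = ball_vec a' b'.
Proof.
rewrite !diff_hom_ball => dab.
have [ab0|g0] := eqVneq (d a - d b) 0.
  move: (ab0); rewrite dab => /eqP; rewrite subr_eq0 => /eqP/d_inj->.
  by move/eqP: ab0; rewrite subr_eq0 => /eqP/d_inj->; rewrite !ball_vec_diag.
have [[c e] [_ uniq_ce]] := d_diff g0.
have [<- <-] := uniq_ce (a, b) erefl.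
by have [<- <-] := uniq_ce (a', b') (esym dab).
Qed.

Lemma diff_hom_ball_surj g : exists a b, diff_hom (ball_vec a b) = g.
Proof.
have [->|g0] := eqVneq g 0; first by exists None, None; rewrite ball_vec_diag diff_hom0.
by have [[a b] [dab _]] := d_diff g0; exists a, b; rewrite diff_hom_ball.
Qed.

Definition kernel_code : pred 'rV[int]_m := [pred y | diff_hom y == 0].

Lemma kernel_code_linear : linear_code kernel_code.
Proof.
split; first by rewrite inE diff_hom0.
by move=> x y; rewrite !inE diff_homB => /eqP-> /eqP->; rewrite subrr.
Qed.

Lemma kernel_code_perfect : perfect_code 1 kernel_code.
Proof.
split=> [x x' y|y].
  rewrite !inE (dist_a_sub y x) (dist_a_sub y x') => /eqP hx /eqP hx' xx' [].
  move=> /ball_indexK ex /ball_indexK ex'; move: xx'; apply/negP; rewrite negbK.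
  suff /addrI/oppr_inj-> : y - x = y - x' by [].
  rewrite -ex -ex'; apply: diff_hom_ball_inj.
  by rewrite ex ex' !diff_homB hx hx'.
have [a [b hab]] := diff_hom_ball_surj (diff_hom y).
exists (y - ball_vec a b); first by rewrite inE diff_homB hab subrr.
by rewrite dist_a_sub opprB addrC subrK dist_ball_vec.
Qed.
End CodeOfDifferences.

Section CodeResidue.
Variables (m : nat) (C : pred 'rV[int]_m).
Hypotheses (C_lin : linear_code C) (C_perf : perfect_code 1 C).

Lemma code0 : 0 \in C.
Proof. by case: C_lin. Qed.

Lemma codeB x y : x \in C -> y \in C -> x - y \in C.
Proof. by case: C_lin => _; apply. Qed.

Lemma codeN x : x \in C -> - x \in C.
Proof. by move=> xC; rewrite -sub0r codeB ?code0. Qed.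

Lemma codeD x y : x \in C -> y \in C -> x + y \in C.
Proof. by move=> xC yC; have := codeB xC (codeN yC); rewrite opprK. Qed.

Lemma nearest_codeword_ex y : exists x, (x \in C) && (dist_a y x <= 1).
Proof. by case: C_perf => _ /(_ y) [x xC yx]; exists x; rewrite xC. Qed.

Definition residue y := y - xchoose (nearest_codeword_ex y).

Lemma residueP y : (y - residue y \in C) && (dist_a (residue y) 0 <= 1).
Proof.
have /andP[xC yx] := xchooseP (nearest_codeword_ex y).
by rewrite /residue subKr xC -dist_a_sub yx.
Qed.

Lemma residue_ball y : dist_a (residue y) 0 <= 1.
Proof. by case/andP: (residueP y). Qed.

Lemma residue_unique y r : y - r \in C -> dist_a r 0 <= 1 -> residue y = r.
Proof.
move=> yrC hr; have /andP[yresC hres] := residueP y.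
apply/eqP; apply: contraT => ne; case: C_perf => disj _; exfalso.
apply: (disj _ _ y yresC yrC); first by rewrite (inj_eq (subrI y)).
by rewrite (dist_a_sub y (y - residue y)) (dist_a_sub y (y - r)) !subKr.
Qed.

Lemma residue_id r : dist_a r 0 <= 1 -> residue r = r.
Proof. by apply: residue_unique; rewrite subrr code0. Qed.

Lemma residue_eq y y' : y - y' \in C -> residue y = residue y'.
Proof.
move=> yy'C; apply: residue_unique (residue_ball y').
have /andP[y'C _] := residueP y'.
by rewrite -(subrK y' y) -addrA codeD.
Qed.

Lemma residueDl a b : residue (residue a + b) = residue (a + b).
Proof.
apply: residue_eq; rewrite opprD addrACA subrr addr0 -opprB codeN //.
by case/andP: (residueP a).
Qed.

Lemma residueDr a b : residue (a + residue b) = residue (a + b).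
Proof. by rewrite addrC residueDl addrC. Qed.
End CodeResidue.

(* Z^m / C, each class being represented by its unique point in the unit ball. *)
Definition code_quotient m (C : pred 'rV[int]_m)
    (C_lin : linear_code C) (C_perf : perfect_code 1 C) :=
  {p : option 'I_m * option 'I_m | canonical_pair p}.
HB.instance Definition _ m C C_lin C_perf := Finite.on (@code_quotient m C C_lin C_perf).

Section CodeQuotient.
Variables (m : nat) (C : pred 'rV[int]_m).
Hypotheses (C_lin : linear_code C) (C_perf : perfect_code 1 C).
Local Notation Q := (code_quotient C_lin C_perf).
Local Notation residue := (residue C_perf).

Definition rep (p : Q) := ball_vec (val p).1 (val p).2.
Definition to_quot z : Q := exist _ (ball_index z) (canonical_ball_index z).

Lemma to_quotK z : dist_a z 0 <= 1 -> rep (to_quot z) = z.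
Proof. exact: ball_indexK. Qed.

Lemma repK : cancel rep to_quot.
Proof. by case=> -[a b] hab; apply: val_inj; rewrite /= ball_vecK. Qed.

Lemma rep_inj : injective rep.
Proof. exact: can_inj repK. Qed.

Lemma rep_ball p : dist_a (rep p) 0 <= 1.
Proof. exact: dist_ball_vec. Qed.

Definition quot_zero := to_quot 0.
Definition quot_add p q := to_quot (residue (rep p + rep q)).
Definition quot_opp p := to_quot (residue (- rep p)).

Lemma rep_zero : rep quot_zero = 0.
Proof. by rewrite to_quotK // dist_a0_le1. Qed.

Lemma rep_add p q : rep (quot_add p q) = residue (rep p + rep q).
Proof. by rewrite to_quotK // residue_ball. Qed.

Lemma rep_opp p : rep (quot_opp p) = residue (- rep p).
Proof. by rewrite to_quotK // residue_ball. Qed.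

Lemma quot_addA : associative quot_add.
Proof. by move=> p q r; apply: rep_inj; rewrite !rep_add (residueDl C_lin) (residueDr C_lin) addrA. Qed.

Lemma quot_addC : commutative quot_add.
Proof. by move=> p q; rewrite /quot_add addrC. Qed.

Lemma quot_add0 : left_id quot_zero quot_add.
Proof. by move=> p; apply: rep_inj; rewrite rep_add rep_zero add0r (residue_id C_lin) ?rep_ball. Qed.

Lemma quot_addN : left_inverse quot_zero quot_opp quot_add.
Proof.
move=> p; apply: rep_inj.
by rewrite rep_add rep_opp (residueDl C_lin) addNr rep_zero (residue_id C_lin) ?dist_a0_le1.
Qed.
End CodeQuotient.

HB.instance Definition _ m C C_lin C_perf :=
  GRing.isZmodule.Build (@code_quotient m C C_lin C_perf)
    (@quot_addA _ _ C_lin C_perf) (@quot_addC _ _ C_lin C_perf)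
    (@quot_add0 _ _ C_lin C_perf) (@quot_addN _ _ C_lin C_perf).

Section QuotientDifferences.
Variables (m : nat) (C : pred 'rV[int]_m).
Hypotheses (C_lin : linear_code C) (C_perf : perfect_code 1 C).
Local Notation Q := (code_quotient C_lin C_perf).

Lemma card_code_quotient : #|{: Q}| = (m ^ 2 + m + 1)%N.
Proof. by rewrite card_sig card_canonical_pair. Qed.

Definition quot_point a : Q := to_quot C_lin C_perf (ball_vec a None).

Lemma quot_point_inj : injective quot_point.
Proof.
have hN a : canonical_pair (a, None) by case: a.
by move=> a b /(congr1 val) /=; rewrite !ball_vecK // => -[].
Qed.

Lemma rep_quot_point_sub a b : rep (quot_point a - quot_point b) = ball_vec a b.
Proof.
rewrite [quot_point a - _]/(quot_add _ (quot_opp _)) rep_add rep_opp (residueDr C_lin).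
rewrite !to_quotK ?dist_ball_vec // /ball_vec opprB addrA subrK.
by rewrite (residue_id C_lin) ?dist_ball_vec.
Qed.

Lemma quot_unique_differences : unique_differences quot_point.
Proof.
move=> g g0; exists (val g); have ce : (val g).1 != (val g).2.
  apply: contra g0 => /eqP ce; apply/eqP/rep_inj.
  by rewrite rep_zero /rep ce ball_vec_diag.
split=> [|[a b] /= /(congr1 (@rep _ _ _ _))]; first by apply: rep_inj; rewrite rep_quot_point_sub.
by rewrite rep_quot_point_sub => /(ball_vec_inj ce) ->; rewrite -surjective_pairing.
Qed.
End QuotientDifferences.

(* The case m = 0 holds as well, so [hm] is not needed. *)
Theorem mainTheorem9 (m : nat) (hm : (1 <= m)%N) :
  (exists C : pred 'rV[int]_m, linear_code C /\ perfect_code 1 C) <->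
  (exists (G : finZmodType) (D : {set G}), planar_difference_set m D).
Proof.
split=> [[C [C_lin C_perf]] | [G [D hD]]].
  exists (code_quotient C_lin C_perf), [set quot_point C_lin C_perf a | a : option 'I_m].
  apply/(planar_difference_set_image (@quot_point_inj _ _ C_lin C_perf)); split.
    exact: card_code_quotient.
  exact: quot_unique_differences.
have [_ [cardD _]] := hD; have [d d_inj defD] := option_enum cardD.
move: hD; rewrite defD => /(planar_difference_set_image d_inj) [_ d_diff].
exists (kernel_code d); split; first exact: kernel_code_linear.
exact: kernel_code_perfect.
Qed.
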